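(* Let $V$ be a filled sparsity pattern, let $S\in\mathbb S^n_V$ have a positive definite completion, and let $i$ be a child of $j$ in the elimination tree. Let $E=E_{I_j,\,I_i\setminus\{j\}}$. Then $$E_{I_j^+I_i}=\begin{bmatrix}1&0\\0&E\end{bmatrix}.$$ Suppose $S_{I_jI_j}=R_jR_j^T$ with $R_j$ upper triangular and nonsingular, and suppose $E^TR_j=RQ^T$ where $R$ is a square upper triangular matrix of order $|I_i|-1$ and $Q$ has orthonormal columns. Put $b=E^TS_{I_j j}$. Then $R$ is nonsingular, $S_{jj}-\|R^{-1}b\|_2^2>0$, and $S_{I_iI_i}=R_iR_i^T$ where $$R_i=\begin{bmatrix}\big(S_{jj}-\|R^{-1}b\|_2^2\big)^{1/2}&(R^{-1}b)^T\\ 0&R\end{bmatrix}.$$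
   Context: A symmetric sparsity pattern $V$ is a set of pairs $(i,j)$ with $1\le j\le i\le n$ containing all $(i,i)$; it is filled (chordal) if $i>j>k$, $(i,k)\in V$, $(j,k)\in V$ imply $(i,j)\in V$. $\mathbb S^n_V$ is the set of real symmetric $n\times n$ matrices with $X_{ij}=X_{ji}=0$ whenever $i\ge j$ and $(i,j)\notin V$. $S$ has a positive definite completion if there is a positive definite symmetric $Z$ with $Z_{ij}=S_{ij}$ for all $(i,j)\in V$. For each $j$, $I_j=\{i>j:(i,j)\in V\}$, $I_j^+=\{j\}\cup I_j$. Elimination tree: the parent of $j$ is $\min I_j$ if $I_j\ne\emptyset$; it is known that $I_i\subseteq I_j^+$ if $i$ is a child of $j$. Index sets are sorted increasingly, $I(a)$ being the $a$-th element; for $J\subseteq I$, $E_{IJ}$ is the $|I|\times|J|$ matrix with $(E_{IJ})_{ab}=1$ iff $I(a)=J(b)$, else $0$. $A_{IJ}$ denotes the submatrix of $A$ with rows $I$ and columns $J$, and $A_{Ij}$ the part of column $j$ with rows in $I$. *)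

(* Indices are 0-based: 'I_n = {0,...,n-1}. *)
From HB Require Import structures.
From mathcomp Require Import all_boot all_order all_algebra.
Set Implicit Arguments. Unset Strict Implicit. Unset Printing Implicit Defensive.
Import Order.TTheory GRing.Theory Num.Theory.
Local Open Scope ring_scope.

Section Defs.
Variable n : nat.

(* A symmetric sparsity pattern: V i j stands for (i,j) in V; j <= i, diagonal included. *)
Definition sparsity_pattern (V : rel 'I_n) : Prop :=
  (forall i j : 'I_n, V i j -> (j <= i)%N) /\ (forall i : 'I_n, V i i).

Definition filled (V : rel 'I_n) : Prop :=
  forall i j k : 'I_n, (j < i)%N -> (k < j)%N -> V i k -> V j k -> V i j.

Definition Iset (V : rel 'I_n) (j : 'I_n) : {set 'I_n} :=
  [set i : 'I_n | (j < i)%N && V i j].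

Definition Iplus (V : rel 'I_n) (j : 'I_n) : {set 'I_n} := j |: Iset V j.

Definition etree_child (V : rel 'I_n) (i j : 'I_n) : Prop :=
  j \in Iset V i /\ (forall k, k \in Iset V i -> (j <= k)%N).

(* I(a): the a-th element (0-based) of the increasingly sorted index set I *)
Definition idx (I : {set 'I_n}) (a : 'I_#|I|) : 'I_n := @enum_val _ (mem I) a.

Variable R : rcfType.

Definition in_SV (V : rel 'I_n) (S : 'M[R]_n) : Prop :=
  S^T = S /\ (forall i j : 'I_n, (j <= i)%N -> ~~ V i j -> S i j = 0 /\ S j i = 0).

Definition posdef (Z : 'M[R]_n) : Prop :=
  Z^T = Z /\ (forall x : 'cV[R]_n, x != 0 -> 0 < (x^T *m Z *m x) 0 0).

Definition has_pd_completion (V : rel 'I_n) (S : 'M[R]_n) : Prop :=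
  exists Z : 'M[R]_n, posdef Z /\ (forall i j : 'I_n, V i j -> Z i j = S i j).

Definition subM (A : 'M[R]_n) (I J : {set 'I_n}) : 'M[R]_(#|I|, #|J|) :=
  \matrix_(a < #|I|, b < #|J|) A (idx a) (idx b).

Definition subcol (A : 'M[R]_n) (I : {set 'I_n}) (j : 'I_n) : 'cV[R]_#|I| :=
  \col_(a < #|I|) A (idx a) j.

Definition Emx (I J : {set 'I_n}) : 'M[R]_(#|I|, #|J|) :=
  \matrix_(a < #|I|, b < #|J|) (idx a == idx b)%:R.

End Defs.

Definition upper_tri (R : rcfType) (m : nat) (A : 'M[R]_m) : Prop :=
  forall a b : 'I_m, (b < a)%N -> A a b = 0.

Definition norm2sq (R : rcfType) (m : nat) (v : 'cV[R]_m) : R :=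
  \sum_(k < m) v k 0 ^+ 2.

(* Since V is filled, every I_k is a clique of V, so a positive definite
   completion Z agrees with S on I_k x I_k and every principal submatrix
   S_{CC}, C a subset of I_k, is positive definite.  Put C = I_i \ {j}; as j is
   the least element of I_i we have I_i = {j} u C and C is contained in I_j
   (the elimination-tree inclusion).  Hence
   - E_{I_j^+ I_i} and S_{I_i I_i} split into blocks along the first index j;
   - E^T S_{I_j I_j} E = S_{CC} and E^T S_{I_j j} = S_{Cj}, since E selects C;
   - E^T R_j = R Q^T with Q^T Q = 1 gives R R^T = E^T R_j R_j^T E = S_{CC}.
   So S_{I_i I_i} = [S_jj b^T; b R R^T] is positive definite, which forces R
   to be nonsingular and the Schur complement S_jj - |R^{-1} b|^2 to be
   positive, and the block matrix R_i of the statement satisfies R_i R_i^T =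
   S_{I_i I_i} by direct multiplication. *)

From HB Require Import structures.
From mathcomp Require Import all_boot all_order all_algebra.
Import Order.TTheory GRing.Theory Num.Theory.
Set Implicit Arguments. Unset Strict Implicit.
Local Open Scope ring_scope.

Section SortedIndexSets.
Variable n : nat.

Lemma enum_set_sorted (A : {set 'I_n}) :
  sorted (fun a b : 'I_n => (a < b)%N) (enum A).
Proof.
apply: sorted_filter; first by move=> a b c /=; apply: ltn_trans.
by rewrite -enumT; have := iota_ltn_sorted 0 n; rewrite -val_enum_ord sorted_map.
Qed.

Lemma enum_setU1_min (A : {set 'I_n}) (x : 'I_n) :
  (forall y, y \in A -> (x < y)%N) -> enum (x |: A) = x :: enum A.
Proof.
move=> hmin; have ltn_tr : transitive (fun a b : 'I_n => (a < b)%N).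
  by move=> a b c /=; apply: ltn_trans.
apply: (irr_sorted_eq ltn_tr) => [a|||y]; rewrite ?ltnn ?enum_set_sorted //.
- rewrite /= path_sortedE // enum_set_sorted andbT.
  by apply/allP => y; rewrite mem_enum; apply: hmin.
- by rewrite inE !mem_enum !inE.
Qed.

Lemma idx_setU1_min (A : {set 'I_n}) (x : 'I_n)
  (hmin : forall y, y \in A -> (x < y)%N) (k : 'I_#|x |: A|) :
  idx k = nth x (x :: enum A) k.
Proof. by rewrite /idx (enum_val_nth x) enum_setU1_min. Qed.

Lemma idx_in (I : {set 'I_n}) (k : 'I_#|I|) : idx k \in I.
Proof. exact: enum_valP. Qed.

Lemma idx_eq_rank (A : {set 'I_n}) y (hy : y \in A) (k : 'I_#|A|) :
  (idx k == y) = (k == enum_rank_in hy y).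
Proof.
apply/eqP/eqP => [hk|->]; last by rewrite /idx enum_rankK_in.
by have := enum_valK_in hy k; rewrite /idx in hk *; rewrite hk.
Qed.

End SortedIndexSets.

Lemma sum_delta (R : pzRingType) (p : nat) (k0 : 'I_p) (f : 'I_p -> R) :
  \sum_k (k == k0)%:R * f k = f k0.
Proof.
rewrite (bigD1 k0) //= eqxx mul1r big1 ?addr0 // => k /negbTE ->.
by rewrite mul0r.
Qed.

Section Selection.
Variables (R : rcfType) (n : nat).

(* The I x J matrix (f(I(a), J(b)))_{ab}; both subM and Emx are of this form. *)
Definition selmx (f : 'I_n -> 'I_n -> R) (I J : {set 'I_n}) :
    'M[R]_(#|I|, #|J|) :=
  \matrix_(a < #|I|, b < #|J|) f (idx a) (idx b).

Lemma selmx_block (f : 'I_n -> 'I_n -> R) (I A J B : {set 'I_n}) (x y : 'I_n)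
  (hI : I = x |: A) (hA : forall u, u \in A -> (x < u)%N)
  (hJ : J = y |: B) (hB : forall v, v \in B -> (y < v)%N)
  (eI : #|I| = (1 + #|A|)%N) (eJ : #|J| = (1 + #|B|)%N) :
  castmx (eI, eJ) (selmx f I J) =
  block_mx (f x y)%:M (\row_b f x (idx b)) (\col_a f (idx a) y) (selmx f A B).
Proof.
subst I J; apply/matrixP => a c; rewrite castmxE mxE.
rewrite !idx_setU1_min // -[a]splitK -[c]splitK.
by case: (split a) => a'; case: (split c) => c';
  rewrite ?(block_mxEul, block_mxEur, block_mxEdl, block_mxEdr) !mxE /=
          ?ord1 ?mulr1n ?add0n /idx -?(enum_val_nth x) -?(enum_val_nth y).
Qed.

Lemma Emx_tr_mul (A B : {set 'I_n}) p (g : 'I_n -> 'I_p -> R) : A \subset B ->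
  (Emx R B A)^T *m (\matrix_(k < #|B|, c < p) g (idx k) c)
  = \matrix_(a < #|A|, c < p) g (idx a) c.
Proof.
move=> /subsetP sAB; apply/matrixP => a c; rewrite !mxE.
have hB := sAB _ (idx_in a).
under eq_bigr => k _ do rewrite !mxE (idx_eq_rank hB).
by rewrite sum_delta /idx enum_rankK_in.
Qed.

Lemma Emx_compress (A B : {set 'I_n}) (S : 'M[R]_n) : A \subset B ->
  (Emx R B A)^T *m subM S B B *m Emx R B A = subM S A A.
Proof.
move=> sAB.
rewrite (Emx_tr_mul (fun u c => S u (idx c)) sAB) -[LHS]trmxK trmx_mul.
have -> : (\matrix_(a, c) S (idx a) (idx c) : 'M_(#|A|, #|B|))^T =
          \matrix_(k, a) (fun u a => S (idx a) u) (idx k) a.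
  by apply/matrixP => k a; rewrite !mxE.
rewrite (Emx_tr_mul (fun u a => S (idx a) u) sAB).
by apply/matrixP => a c; rewrite !mxE.
Qed.

Lemma Emx_tr_subcol (A B : {set 'I_n}) (S : 'M[R]_n) j :
  A \subset B -> (Emx R B A)^T *m subcol S B j = subcol S A j.
Proof. exact: (Emx_tr_mul (fun u (_ : 'I_1) => S u j)). Qed.

End Selection.

Lemma gram_transform (R : comPzRingType) p q r
  (E : 'M[R]_(p, q)) (L : 'M[R]_(p, r)) (M : 'M[R]_q) (Q : 'M[R]_(r, q)) :
  E^T *m L = M *m Q^T -> Q^T *m Q = 1%:M -> E^T *m (L *m L^T) *m E = M *m M^T.
Proof.
move=> hEL hQ.
rewrite mulmxA -mulmxA -[L^T *m E]trmxK trmx_mul trmxK hEL trmx_mul trmxK.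
by rewrite mulmxA -(mulmxA M) hQ mulmx1.
Qed.

Section PositiveQuadratic.
Variable R : rcfType.

Definition pos_quad m (M : 'M[R]_m) : Prop :=
  forall x : 'cV[R]_m, x != 0 -> 0 < (x^T *m M *m x) 0 0.

Lemma pos_quad_cast m m' (e : m = m') (M : 'M[R]_m) :
  pos_quad M -> pos_quad (castmx (e, e) M).
Proof. by case: m' / e; rewrite castmx_id. Qed.

(* Principal submatrices of a positive form are positive: Z_{II} = P^T Z P
   with P the injective selection of the columns I. *)
Lemma pos_quad_subM n (Z : 'M[R]_n) (I : {set 'I_n}) :
  pos_quad Z -> pos_quad (subM Z I I).
Proof.
move=> hZ x hx.
pose P := \matrix_(k < n, a < #|I|) ((k == idx a)%:R : R).
have hPP : P^T *m P = 1%:M.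
  apply/matrixP => a c; rewrite !mxE.
  under eq_bigr => k _ do rewrite !mxE.
  by rewrite sum_delta (inj_eq enum_val_inj).
have hs : subM Z I I = P^T *m Z *m P.
  apply/matrixP => a c; rewrite !mxE.
  under eq_bigr => l _ do rewrite [P l c]mxE mulrC.
  rewrite sum_delta mxE.
  under eq_bigr => l _ do rewrite !mxE.
  by rewrite sum_delta.
have hPx : P *m x != 0.
  by apply: contraNneq hx => h; rewrite -[x]mul1mx -hPP -mulmxA h mulmx0.
by have := hZ _ hPx; rewrite hs trmx_mul !mulmxA.
Qed.

(* A kernel vector v of M gives v^T (M M^T) v = 0, so M M^T > 0 forces M
   to be nonsingular. *)
Lemma pos_quad_gram_unit m (M : 'M[R]_m) :
  pos_quad (M *m M^T) -> M \in unitmx.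
Proof.
move=> hM; apply: contraT => hu.
have : kermx M != 0 by rewrite kermx_eq0 row_free_unit.
case/rowV0Pn => v /sub_kermxP hv v0.
have := hM v^T; rewrite trmx_eq0 => /(_ v0).
by rewrite trmxK !mulmxA hv !mul0mx mxE ltxx.
Qed.

(* Testing [s b^T; b M M^T] against x = (1, -M^{-T} M^{-1} b) shows that the
   Schur complement s - |M^{-1} b|^2 is positive. *)
Lemma schur_complement_pos m (s : R) (b : 'cV[R]_m) (M : 'M[R]_m) :
  M \in unitmx -> pos_quad (block_mx s%:M b^T b (M *m M^T)) ->
  0 < s - norm2sq (invmx M *m b).
Proof.
move=> hu hpos; set w := invmx M *m b.
set x := col_mx (1%:M : 'M[R]_1) (- ((invmx M)^T *m w)).
have x_neq0 : x != 0.
  apply: contra_neq (@oner_neq0 R) => /matrixP /(_ 0 0).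
  by rewrite /x mxE; case: splitP => [a _|[]//]; rewrite !ord1 !mxE.
have Mx_low : b *m 1%:M + M *m M^T *m - ((invmx M)^T *m w) = 0.
  rewrite mulmx1 mulmxN -!mulmxA (mulmxA M^T) -trmx_mul mulVmx // trmx1 mul1mx.
  by rewrite /w mulKVmx // subrr.
have := hpos x x_neq0.
rewrite /x tr_col_mx -mulmxA mul_block_col mul_row_col Mx_low mulmx0 addr0.
rewrite trmx1 mul1mx mulmx1 mulmxN mulmxA -trmx_mul -/w !mxE /norm2sq mulr1n.
by under eq_bigr => k _ do rewrite mxE -expr2.
Qed.

Lemma block_cholesky_factor m (s : R) (b : 'cV[R]_m) (M : 'M[R]_m) :
  M \in unitmx -> 0 <= s - norm2sq (invmx M *m b) ->
  let L := block_mx (Num.sqrt (s - norm2sq (invmx M *m b)))%:M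
                    (invmx M *m b)^T 0 M in
  L *m L^T = block_mx s%:M b^T b (M *m M^T).
Proof.
move=> hu; set w := invmx M *m b => hd L.
have hMw : M *m w = b by rewrite /w mulKVmx.
rewrite /L tr_block_mx mulmx_block !trmx0 trmxK tr_scalar_mx.
rewrite !mulmx0 !mul0mx ?addr0 ?add0r -trmx_mul hMw; congr block_mx.
apply/matrixP => a c; rewrite !ord1 !mxE big_ord1 !mxE /= !mulr1n.
rewrite -expr2 sqr_sqrtr // /norm2sq.
by under [X in _ + X]eq_bigr => k _ do rewrite mxE -expr2; rewrite subrK.
Qed.
End PositiveQuadratic.

Section FilledPattern.
Variables (n : nat) (V : rel 'I_n).
Hypothesis Hfill : filled V.

Lemma Iset_gt k u : u \in Iset V k -> (k < u)%N.
Proof. by rewrite inE => /andP[]. Qed.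

Lemma Iset_clique k u v :
  u \in Iset V k -> v \in Iset V k -> (v < u)%N -> V u v.
Proof.
rewrite !inE => /andP[ku Vuk] /andP[kv Vvk] vu.
exact: Hfill vu kv Vuk Vvk.
Qed.

Lemma card_Iplus j : #|Iplus V j| = (1 + #|Iset V j|)%N.
Proof. by rewrite /Iplus cardsU1 inE ltnn. Qed.

Variables i j : 'I_n.
Hypothesis Hchild : etree_child V i j.

Lemma child_Iset : Iset V i = j |: (Iset V i :\ j).
Proof. by rewrite setD1K //; case: Hchild. Qed.

Lemma card_child : #|Iset V i| = (1 + #|Iset V i :\ j|)%N.
Proof. by rewrite (cardsD1 j); case: Hchild => ->. Qed.

Lemma child_gt u : u \in Iset V i :\ j -> (j < u)%N.
Proof.
case: Hchild => _ hmin; rewrite in_setD1 => /andP[uj /hmin].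
by rewrite leq_eqVlt => /orP[/eqP/val_inj ju|//]; rewrite ju eqxx in uj.
Qed.

(* The elimination-tree inclusion I_i \ {j} in I_j, from the clique property. *)
Lemma child_sub : Iset V i :\ j \subset Iset V j.
Proof.
apply/subsetP => u hu; have ju := child_gt hu.
case: Hchild => hj _; move: hu; rewrite in_setD1 => /andP[_ hu].
by rewrite inE ju (Iset_clique hu hj ju).
Qed.

End FilledPattern.

Section ChildBlocks.
Variables (R : rcfType) (n : nat) (V : rel 'I_n) (i j : 'I_n).
Hypothesis Hchild : etree_child V i j.

Lemma Emx_child_block (e1 : #|Iplus V j| = (1 + #|Iset V j|)%N)
  (e2 : #|Iset V i| = (1 + #|Iset V i :\ j|)%N) :
  castmx (e1, e2) (Emx R (Iplus V j) (Iset V i))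
  = block_mx 1%:M 0 0 (Emx R (Iset V j) (Iset V i :\ j)).
Proof.
have jIj : j \notin Iset V j by rewrite inE ltnn.
have -> : Emx R (Iplus V j) (Iset V i)
          = selmx (fun u v => (u == v)%:R) (Iplus V j) (Iset V i) by [].
rewrite (selmx_block _ erefl (@Iset_gt _ V j)
                     (child_Iset Hchild) (child_gt Hchild)).
rewrite eqxx; congr block_mx; [apply/rowP => c | apply/colP => a]; rewrite !mxE.
- by have := idx_in c; rewrite in_setD1 eq_sym => /andP[/negbTE ->].
- by case: eqP => // ha; have := idx_in a; rewrite ha (negbTE jIj).
Qed.

Lemma subM_child_block (S : 'M[R]_n) (HSsym : S^T = S)
  (e : #|Iset V i| = (1 + #|Iset V i :\ j|)%N) :
  castmx (e, e) (subM S (Iset V i) (Iset V i))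
  = block_mx (S j j)%:M (subcol S (Iset V i :\ j) j)^T
             (subcol S (Iset V i :\ j) j)
             (subM S (Iset V i :\ j) (Iset V i :\ j)).
Proof.
have -> : subM S (Iset V i) (Iset V i)
          = selmx (fun u v => S u v) (Iset V i) (Iset V i) by [].
rewrite (selmx_block _ (child_Iset Hchild) (child_gt Hchild)
                     (child_Iset Hchild) (child_gt Hchild)).
by congr block_mx; apply/rowP => c; rewrite !mxE -[in LHS]HSsym mxE.
Qed.
End ChildBlocks.

(* A positive definite completion agrees with S on cliques, so S restricted to
   any subset of some I_k is a positive form. *)
Lemma completion_clique_pos (R : rcfType) n (V : rel 'I_n) (S : 'M[R]_n)
  (k : 'I_n) (C : {set 'I_n}) :
  filled V -> (forall u, V u u) -> S^T = S -> has_pd_completion V S ->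
  C \subset Iset V k -> pos_quad (subM S C C).
Proof.
move=> Hfill Vdiag HSsym [Z [[Zsym Zpos] ZS]] /subsetP sC.
have ZS_C : subM Z C C = subM S C C.
  apply/matrixP => a b; rewrite !mxE.
  have [ha hb] := (sC _ (idx_in a), sC _ (idx_in b)).
  case: (ltngtP (idx a) (idx b)) => [ab|ba|/val_inj ->]; last exact: ZS.
  - by rewrite -[in LHS]Zsym -[in RHS]HSsym !mxE ZS // (Iset_clique Hfill hb ha).
  - by rewrite ZS // (Iset_clique Hfill ha hb).
by rewrite -ZS_C; apply: pos_quad_subM.
Qed.

Unset Implicit Arguments.

Theorem mainTheorem4 (R : rcfType) (n : nat) (V : rel 'I_n) (S : 'M[R]_n)
  (i j : 'I_n)
  (HV : sparsity_pattern V) (Hfill : filled V)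
  (HS : in_SV V S) (Hpd : has_pd_completion V S)
  (Hchild : etree_child V i j)
  (Rj : 'M[R]_#|Iset V j|) (Rm : 'M[R]_#|Iset V i :\ j|)
  (Q : 'M[R]_(#|Iset V j|, #|Iset V i :\ j|))
  (HRj_up : upper_tri Rj) (HRj_ns : Rj \in unitmx)
  (HSRj : subM S (Iset V j) (Iset V j) = Rj *m Rj^T)
  (HR_up : upper_tri Rm)
  (HQ : Q^T *m Q = 1%:M)
  (HRQ : (Emx R (Iset V j) (Iset V i :\ j))^T *m Rj = Rm *m Q^T) :
  let E := Emx R (Iset V j) (Iset V i :\ j) in
  let b := E^T *m subcol S (Iset V j) j in
  let d := S j j - norm2sq (invmx Rm *m b) in
  let Ri := block_mx (Num.sqrt d)%:M (invmx Rm *m b)^T 0 Rm in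
  (exists (e1 : #|Iplus V j| = (1 + #|Iset V j|)%N)
          (e2 : #|Iset V i| = (1 + #|Iset V i :\ j|)%N),
      castmx (e1, e2) (Emx R (Iplus V j) (Iset V i)) = block_mx 1%:M 0 0 E)
  /\ Rm \in unitmx
  /\ 0 < d
  /\ (exists e : #|Iset V i| = (1 + #|Iset V i :\ j|)%N,
      castmx (e, e) (subM S (Iset V i) (Iset V i)) = Ri *m Ri^T).
Proof.
move=> E b d Ri.
set C := Iset V i :\ j.
have e1 := card_Iplus V j; have e2 := card_child Hchild.
have [_ Vdiag] := HV; have [HSsym _] := HS.
have hb : b = subcol S C j by apply: Emx_tr_subcol; apply: child_sub.
have hRR : Rm *m Rm^T = subM S C C.
  rewrite -(Emx_compress S (child_sub Hfill Hchild)) HSRj.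
  by rewrite (gram_transform HRQ HQ).
have hSi : castmx (e2, e2) (subM S (Iset V i) (Iset V i))
           = block_mx (S j j)%:M b^T b (Rm *m Rm^T).
  by rewrite hb hRR; apply: subM_child_block.
have hpos : pos_quad (block_mx (S j j)%:M b^T b (Rm *m Rm^T)).
  rewrite -hSi; apply: pos_quad_cast.
  exact: (completion_clique_pos (k := i) Hfill Vdiag HSsym Hpd (subxx _)).
have hu : Rm \in unitmx.
  apply: pos_quad_gram_unit; rewrite hRR.
  exact: (completion_clique_pos (k := i) Hfill Vdiag HSsym Hpd (subD1set _ _)).
have hd : 0 < d by apply: schur_complement_pos.
split; first by exists e1, e2; apply: Emx_child_block.
do 2![split=> //]; exists e2.
by rewrite hSi (block_cholesky_factor hu (ltW hd)).
Qed.
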